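(* Let $n_1>n_2>n_3$ be pairwise coprime positive integers forming a minimal system of generators of $\mathcal S=\langle n_1,n_2,n_3\rangle$. Define $$C_1=\min_{\alpha=1,\dots,I_1}\left\{\alpha n_2-[-n_3n_1^{-1}]_{n_2}\left\lfloor\frac{\alpha n_1}{[n_3n_2^{-1}]_{n_1}}\right\rfloor\right\},\quad C_2=\min_{\beta=1,\dots,I_2}\left\{\beta n_1-[-n_3n_2^{-1}]_{n_1}\left\lfloor\frac{\beta n_2}{[n_3n_1^{-1}]_{n_2}}\right\rfloor\right\},$$ $$C_3=\min_{\gamma=1,\dots,I_3}\left\{\gamma n_1-[-n_2n_3^{-1}]_{n_1}\left\lfloor\frac{\gamma n_3}{[n_2n_1^{-1}]_{n_3}}\right\rfloor\right\},$$ where $I_1=\left\lceil [-n_3n_1^{-1}]_{n_2}\frac{[n_3n_2^{-1}]_{n_1}}{n_3}\right\rceil$, $I_2=\left\lceil [-n_3n_2^{-1}]_{n_1}\frac{[n_3n_1^{-1}]_{n_2}}{n_3}\right\rceil$, $I_3=\left\lceil [-n_2n_3^{-1}]_{n_1}\frac{[n_2n_1^{-1}]_{n_3}}{n_2}\right\rceil$. Then the Frobenius number of $\mathcal S$ is $$F(\mathcal S)=C_1n_1+\max\left\{[C_2n_2n_3^{-1}]_{n_1}\,n_3,\ [C_3n_3n_2^{-1}]_{n_1}\,n_2\right\}-n_1-n_2-n_3 .$$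
   Context: $\mathbb N$ denotes the nonnegative integers. For integers $a_1,\dots,a_r$, $\langle a_1,\dots,a_r\rangle=\{\sum t_la_l: t_l\in\mathbb N\}$. Minimal system of generators means that no $n_l$ belongs to the monoid generated by the other two. The Frobenius number $F(\mathcal S)$ is the largest integer not in $\mathcal S$. For an integer $m$ and $n\ge 1$, $[m]_n\in\{0,\dots,n-1\}$ denotes the remainder of $m$ upon division by $n$; for $a$ coprime to $n$, the symbol $a^{-1}$ inside $[\cdot]_n$ denotes a multiplicative inverse of $a$ modulo $n$ (so e.g. $[C_2n_2n_3^{-1}]_{n_1}$ is the remainder modulo $n_1$ of $C_2n_2$ times an inverse of $n_3$ modulo $n_1$). *)

From HB Require Import structures.
From mathcomp Require Import all_boot all_order all_algebra.
Set Implicit Arguments. Unset Strict Implicit. Unset Printing Implicit Defensive.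
Import Order.TTheory GRing.Theory Num.Theory.
Local Open Scope ring_scope.

Definition inS3 (a1 a2 a3 : nat) (m : int) : Prop :=
  exists t1 t2 t3 : nat, m = (t1 * a1 + t2 * a2 + t3 * a3)%N%:Z.

Definition inS2 (a1 a2 : nat) (m : int) : Prop :=
  exists t1 t2 : nat, m = (t1 * a1 + t2 * a2)%N%:Z.

(* a multiplicative inverse of a modulo n (a Bezout coefficient);
   it is an inverse whenever a and n are coprime *)
Definition minv (a n : int) : int := (egcdz a n).1.

(* [c * a^{-1}]_n : remainder mod n of c times an inverse of a mod n *)
Definition resinv (c a n : int) : int := ((c * minv a n) %% n)%Z.

Definition ceilz (x y : int) : int := - ((- x) %/ y)%Z.

Definition minOver (I : nat) (f : nat -> int) : int :=
  foldr (fun k m => Num.min (f k) m) (f 1%N) (iota 1 I).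

Definition is_frobenius (n1 n2 n3 : nat) (F : int) : Prop :=
  ~ inS3 n1 n2 n3 F /\ forall m : int, F < m -> inS3 n1 n2 n3 m.

From HB Require Import structures.
From mathcomp Require Import all_boot all_order all_algebra.
From mathcomp Require Import zify ring.
Import Order.TTheory GRing.Theory Num.Theory.
Local Open Scope ring_scope.

(* Let c_i be the least positive integer with c_i n_i in the monoid generated by the
   other two generators. If c n1 = x n2 + y n3, coprimality forces x + y v = m n1 with
   v = [n3 n2^-1]_n1, hence c = m n2 - y u with u = [-n3 n1^-1]_n2 and y <= m n1 / v;
   minimizing over m gives the paper's C_1, and candidates with m > I_1 exceed the one
   with m = 1, so C_1 = c_1 (likewise C_2 = c_2 and C_3 = c_3).
   Herzog's minimal relations c_i n_i = r_ij n_j + r_ik n_k have positive coefficients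
   and satisfy c_j = r_ij + r_kj, so r_23 = [c_2 n_2 n_3^-1]_n1 and
   r_32 = [c_3 n_3 n_2^-1]_n1. Reducing by the relations, every integer is
   t n1 + x n2 + y n3 with (x, y) in the L-shaped region x < c_2, y < c_3,
   (x < r_12 or y < r_13); it lies in S iff t >= 0, and the two outer corners of the
   region give F + n1 = c_1 n1 + max (r_32 n2, r_23 n3) - n2 - n3. *)

Lemma resinv_spec (c a n : int) : 0 < n -> coprimez a n ->
  0 <= resinv c a n < n /\ exists q : int, resinv c a n * a - c = q * n.
Proof.
move=> n_gt0 /eqP gcd1; rewrite /resinv /minv.
case: (egcdzP a n) => u v /= Bezout _; rewrite gcd1 in Bezout.
split; first by rewrite modz_ge0 ?gt_eqF // ltz_pmod.
exists (- c * v - (c * u %/ n)%Z * a); rewrite /modz.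
have ua : u * a = 1 - v * n by rewrite -Bezout; ring.
transitivity (c * (u * a - 1) - (c * u %/ n)%Z * n * a); first ring.
by rewrite ua; ring.
Qed.

Lemma resinv_unique (c a n r : int) : 0 < n -> coprimez a n -> 0 <= r < n ->
  (exists k : int, r * a - c = k * n) -> resinv c a n = r.
Proof.
move=> n_gt0 co /andP [r_ge0 r_lt] [k Hk].
have [/andP [s_ge0 s_lt] [q Hq]] := @resinv_spec c a n n_gt0 co.
have : (n %| (resinv c a n - r) * a)%Z by apply/dvdzP; exists (q - k); lia.
rewrite Gauss_dvdzl; last by rewrite coprimez_sym.
case/dvdzP => j Hj.
have j0 : j = 0 by nia.
by move: Hj; rewrite j0 mul0r; lia.
Qed.

Lemma coprimez_nat {a b : nat} : coprime a b -> coprimez a%:Z b%:Z.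
Proof. by rewrite coprimezE. Qed.

Lemma minOver_le1 (I : nat) (f : nat -> int) : minOver I f <= f 1%N.
Proof. by rewrite /minOver; elim: (iota 1 I) => //= h t IH; rewrite ge_min IH orbT. Qed.

Lemma minOver_le (I : nat) (f : nat -> int) k : (1 <= k <= I)%N -> minOver I f <= f k.
Proof.
move=> k_range; have : k \in iota 1 I by rewrite mem_iota; lia.
rewrite /minOver; elim: (iota 1 I) => // h t IH; rewrite inE /= => /orP[/eqP->|/IH lekf].
  by rewrite ge_min lexx.
by rewrite ge_min lekf orbT.
Qed.

Lemma minOver_attained (I : nat) (f : nat -> int) :
  exists2 k, (0 < k)%N & minOver I f = f k.
Proof.
rewrite /minOver.
have : all (leq 1) (iota 1 I) by apply/allP => k; rewrite mem_iota => /andP[].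
elim: (iota 1 I) => [|h t IH] /=; first by exists 1%N.
case/andP=> h_gt0 /IH [k k_gt0 ->].
by case: (leP (f h) (f k)) => _; [exists h | exists k].
Qed.

Lemma ceilz_mul_ge (x y : int) : 0 < y -> 0 <= x -> x <= `|ceilz x y|%:Z * y.
Proof.
move=> y_gt0 x_ge0; rewrite /ceilz.
have floor_le := lez_floor (- x) (lt0r_neq0 y_gt0).
have floor_le0 : ((- x) %/ y)%Z <= 0 by nia.
rewrite gez0_abs; lia.
Qed.

Lemma gt0_of_mulr_gt0 (x y : int) : 0 <= y -> 0 < x * y -> 0 < x.
Proof. nia. Qed.

Definition least_mul_in (a b c k : nat) : Prop :=
  [/\ (0 < k)%N, inS2 b c (k * a)%N%:Z &
      forall k' : nat, (0 < k')%N -> inS2 b c (k' * a)%N%:Z -> (k <= k')%N].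

Lemma least_mul_in_le {a b c k : nat} {k' x y : int} : least_mul_in a b c k ->
  k' * a%:Z = x * b%:Z + y * c%:Z -> 0 < k' -> 0 <= x -> 0 <= y -> k%:Z <= k'.
Proof.
case=> _ _ least E k'_gt0 x_ge0 y_ge0.
suff : (k <= `|k'|)%N by lia.
by apply: least; [lia | exists `|x|%N, `|y|%N; lia].
Qed.

Lemma least_mul_inC {a b c k : nat} : least_mul_in a b c k -> least_mul_in a c b k.
Proof.
case=> k_gt0 [x [y E]] least; split=> //; first by exists y, x; lia.
by move=> k' k'_gt0 [x' [y' E']]; apply: least => //; exists y', x'; lia.
Qed.

Lemma least_mul_in_rel {a b c k : nat} : least_mul_in a b c k ->
  exists x y : nat, k%:Z * a%:Z = x%:Z * b%:Z + y%:Z * c%:Z.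
Proof. by case=> _ [x [y E]] _; exists x, y; lia. Qed.

Definition mul_candidate (a b c m : nat) : int :=
  m%:Z * b%:Z - resinv (- c%:Z) a%:Z b%:Z * ((m%:Z * a%:Z) %/ resinv c%:Z b%:Z a%:Z)%Z.

Section LeastMultiplier.

Variables a b c : nat.
Hypotheses (a_gt1 : (1 < a)%N) (c_gt0 : (0 < c)%N) (c_lt_b : (c < b)%N).
Hypotheses (coprime_ab : coprime a b) (coprime_ac : coprime a c).

Local Notation u := (resinv (- c%:Z) a%:Z b%:Z).
Local Notation v := (resinv c%:Z b%:Z a%:Z).
Local Notation g := (mul_candidate a b c).

(* [u a + c] is a multiple [q b] of [b]; then [q = v mod a] and [0 < q <= a] force [q = v]. *)
Lemma resinv_pair : [/\ 0 < u, 0 < v, v < a%:Z & u * a%:Z + c%:Z = v * b%:Z].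
Proof.
have coprime_ba : coprime b a by rewrite coprime_sym.
have [/andP[u_ge0 u_lt] [qu Hu]] := @resinv_spec (- c%:Z) a%:Z b%:Z
  ltac:(lia) (coprimez_nat coprime_ab).
have [/andP[v_ge0 v_lt] [qv Hv]] := @resinv_spec c%:Z b%:Z a%:Z
  ltac:(lia) (coprimez_nat coprime_ba).
have v_gt0 : 0 < v.
  rewrite lt_neqAle v_ge0 andbT; apply/negP => /eqP v0.
  have /gcdn_idPl a_dvd_c : (a %| c)%N.
    by rewrite -(dvdzE a%:Z c%:Z); apply/dvdzP; exists (- qv); lia.
  by move: coprime_ac; rewrite /coprime a_dvd_c; lia.
have qu_eq_v : qu = v.
  have : (a%:Z %| (qu - v) * b%:Z)%Z by apply/dvdzP; exists (u - qv); lia.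
  rewrite Gauss_dvdzl ?coprimez_nat //; case/dvdzP => k Hk.
  have qu_gt0 : 0 < qu by nia.
  have qu_le : qu <= a%:Z by nia.
  have k0 : k = 0 by nia.
  by move: Hk; rewrite k0 mul0r; lia.
split; [nia | done | done | lia].
Qed.

Lemma mul_candidate_spec (m : nat) : (0 < m)%N ->
  [/\ 0 < g m,
      g m * a%:Z = ((m%:Z * a%:Z) %% v)%Z * b%:Z + ((m%:Z * a%:Z) %/ v)%Z * c%:Z
    & v * g m = m%:Z * c%:Z + u * ((m%:Z * a%:Z) %% v)%Z].
Proof.
move=> m_gt0; have [u_gt0 v_gt0 _ uv] := resinv_pair; rewrite /mul_candidate.
set q := ((m%:Z * a%:Z) %/ v)%Z; set s := ((m%:Z * a%:Z) %% v)%Z.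
have Emav : m%:Z * a%:Z = q * v + s := divz_eq _ _.
have s_ge0 : 0 <= s := modz_ge0 _ (lt0r_neq0 v_gt0).
have q_ge0 : 0 <= q by rewrite divz_ge0 //; lia.
have Ea : (m%:Z * b%:Z - u * q) * a%:Z = s * b%:Z + q * c%:Z.
  have := congr1 ( *%R^~ q) uv; have := congr1 ( *%R^~ b%:Z) Emav; rewrite /=; lia.
have Ev : v * (m%:Z * b%:Z - u * q) = m%:Z * c%:Z + u * s.
  have := congr1 ( *%R^~ m%:Z) uv; have := congr1 ( *%R^~ u) Emav; rewrite /=; lia.
split=> //; apply: (@gt0_of_mulr_gt0 _ a%:Z) => //; rewrite Ea; nia.
Qed.

Local Notation I := `|ceilz (u * v) c%:Z|%N.

(* [v g m = m c + u (m a mod v)] exceeds [u v + c > v g 1] as soon as [m c > u v]. *)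
Lemma mul_candidate_gt1 (m : nat) : (I < m)%N -> g 1 < g m.
Proof.
move=> I_lt_m; have [u_gt0 v_gt0 _ _] := resinv_pair.
have [_ _ Ev1] := @mul_candidate_spec 1%N isT.
have [_ _ Evm] := @mul_candidate_spec m (leq_ltn_trans (leq0n I) I_lt_m).
have uv_le := @ceilz_mul_ge (u * v) c%:Z ltac:(lia) ltac:(nia).
have s1_lt := ltz_pmod (1%:Z * a%:Z) v_gt0.
have sm_ge0 := modz_ge0 (m%:Z * a%:Z) (lt0r_neq0 v_gt0).
have : v * g 1 < v * g m by rewrite Ev1 Evm; nia.
by rewrite ltr_pM2l.
Qed.

(* A representation k' a = x b + y c forces x + y v = m a for some m, and then
   k' = m b - y u >= g m because y <= m a / v. *)
Lemma mul_candidate_le (k' : nat) : (0 < k')%N -> inS2 b c (k' * a)%N%:Z ->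
  exists2 m : nat, (0 < m)%N & g m <= k'%:Z.
Proof.
move=> k'_gt0 [x [y Exy]]; have [u_gt0 v_gt0 _ uv] := resinv_pair.
have E : (x%:Z + y%:Z * v) * b%:Z = (k'%:Z + y%:Z * u) * a%:Z.
  by have := congr1 ( *%R^~ y%:Z) uv; rewrite /=; lia.
have : (a%:Z %| (x%:Z + y%:Z * v) * b%:Z)%Z.
  by apply/dvdzP; exists (k'%:Z + y%:Z * u); lia.
rewrite Gauss_dvdzl ?coprimez_nat //; case/dvdzP => m Em.
have xyv_gt0 : 0 < x%:Z + y%:Z * v.
  case: (posnP x) => [x0|]; last nia.
  case: (posnP y) => [y0|]; last nia.
  by move: Exy; rewrite x0 y0; lia.
have m_gt0 : 0 < m by nia.
have Emb : m * b%:Z = k'%:Z + y%:Z * u.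
  by apply: (@mulIf _ a%:Z); [rewrite lt0r_neq0 //; lia | rewrite -E Em; ring].
exists `|m|%N; first lia.
have : y%:Z <= ((m * a%:Z) %/ v)%Z by rewrite lez_divRL // -Em; nia.
rewrite /mul_candidate gez0_abs; nia.
Qed.

Lemma least_mul_in_minOver :
  exists k : nat, minOver I g = k%:Z /\ least_mul_in a b c k.
Proof.
have [m0 m0_gt0 Em0] := minOver_attained I g; rewrite Em0.
have [g_gt0 Ega _] := @mul_candidate_spec m0 m0_gt0.
have [_ v_gt0 _ _] := resinv_pair.
have g_le_admissible : forall k' : nat, (0 < k')%N -> inS2 b c (k' * a)%N%:Z ->
    g m0 <= k'%:Z.
  move=> k' k'_gt0 /(@mul_candidate_le k' k'_gt0) [m m_gt0 gm_le].
  apply: le_trans gm_le; rewrite -Em0; case: (leqP m I) => [m_le|I_lt_m].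
    by apply: minOver_le; rewrite m_gt0.
  exact: le_trans (minOver_le1 I g) (ltW (@mul_candidate_gt1 m I_lt_m)).
exists `|g m0|%N; rewrite gez0_abs ?ltW //; split=> //; split; first lia.
- have s_ge0 := modz_ge0 (m0%:Z * a%:Z) (lt0r_neq0 v_gt0).
  have q_ge0 : 0 <= ((m0%:Z * a%:Z) %/ v)%Z by rewrite divz_ge0 //; lia.
  exists `|((m0%:Z * a%:Z) %% v)%Z|%N, `|((m0%:Z * a%:Z) %/ v)%Z|%N.
  by rewrite PoszD !PoszM !gez0_abs // ?Ega // ltW.
- by move=> k' k'_gt0 /(g_le_admissible k' k'_gt0); lia.
Qed.

End LeastMultiplier.

(* If [rij = 0] then [nk] divides [ci], so [ci >= nk]; but [k ni = nj + q nk]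
   with [k = [nj ni^-1]_nk < nk] and [q > 0] (as [nj] is not in <ni, nk>). *)
Lemma least_mul_rel_gt0 {ni nj nk ci rij rik : nat} : (0 < nk)%N -> coprime ni nk ->
  ~ inS2 ni nk nj%:Z -> least_mul_in ni nj nk ci ->
  ci%:Z * ni%:Z = rij%:Z * nj%:Z + rik%:Z * nk%:Z -> (0 < rij)%N.
Proof.
move=> nk_gt0 co nj_notin least E; rewrite lt0n; apply/negP => /eqP rij0.
have [ci_gt0 _ _] := least.
have : (nk %| ci * ni)%N by apply/dvdnP; exists rik; lia.
rewrite Gauss_dvdl; last by rewrite coprime_sym.
move/(dvdn_leq ci_gt0) => nk_le_ci.
have [/andP [k_ge0 k_lt] [q Hq]] :=
  @resinv_spec nj%:Z ni%:Z nk%:Z ltac:(lia) (coprimez_nat co).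
move: k_ge0 k_lt Hq; set k := resinv _ _ _ => k_ge0 k_lt Hq.
case: (lerP q 0) => [q_le0|q_gt0].
  by apply: nj_notin; exists `|k|%N, `|q|%N; lia.
have k_gt0 : 0 < k.
  by apply: (@gt0_of_mulr_gt0 _ ni%:Z) => //; have := @mulr_gt0 _ q nk%:Z q_gt0; lia.
have := @least_mul_in_le _ _ _ _ k 1 q least ltac:(lia) k_gt0; lia.
Qed.

(* Otherwise [(ci - rji) ni = (rij - cj) nj + (rik + rjk) nk] contradicts minimality of [ci]. *)
Lemma rel_lt_least_mul {ni nj nk ci cj rij rik rji rjk : nat} : least_mul_in ni nj nk ci ->
  ci%:Z * ni%:Z = rij%:Z * nj%:Z + rik%:Z * nk%:Z ->
  cj%:Z * nj%:Z = rji%:Z * ni%:Z + rjk%:Z * nk%:Z ->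
  (0 < rji)%N -> (0 < rik)%N -> (0 < nk)%N -> (rij < cj)%N.
Proof.
move=> least Ei Ej rji_gt0 rik_gt0 nk_gt0; rewrite ltnNge; apply/negP => cj_le.
have E : (ci%:Z - rji%:Z) * ni%:Z = (rij%:Z - cj%:Z) * nj%:Z + (rik%:Z + rjk%:Z) * nk%:Z.
  lia.
have pos : 0 < ci%:Z - rji%:Z.
  apply: (@gt0_of_mulr_gt0 _ ni%:Z) => //; rewrite E; nia.
have := least_mul_in_le least E pos; lia.
Qed.

(* [(rij + rkj) nj = (ci - rki) ni + (ck - rik) nk] is a positive multiple of [nj] in <ni, nk>. *)
Lemma least_mul_le_rel_sum {ni nj nk ci cj ck rij rik rkj rki : nat} :
  least_mul_in nj ni nk cj ->
  ci%:Z * ni%:Z = rij%:Z * nj%:Z + rik%:Z * nk%:Z ->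
  ck%:Z * nk%:Z = rki%:Z * ni%:Z + rkj%:Z * nj%:Z ->
  (rki < ci)%N -> (rik < ck)%N -> (0 < ni)%N -> (cj <= rij + rkj)%N.
Proof.
move=> least Ei Ek rki_lt rik_lt ni_gt0.
have E : (rij%:Z + rkj%:Z) * nj%:Z = (ci%:Z - rki%:Z) * ni%:Z + (ck%:Z - rik%:Z) * nk%:Z.
  lia.
have pos : 0 < rij%:Z + rkj%:Z.
  apply: (@gt0_of_mulr_gt0 _ nj%:Z) => //; rewrite E; nia.
have := least_mul_in_le least E pos; lia.
Qed.

(* Adding the three relations gives [sum_i c_i n_i = sum_i (r_ji + r_ki) n_i], so the
   inequalities [c_i <= r_ji + r_ki] must all be equalities. *)
Lemma least_mul_eq_rel_sum {n1 n2 n3 c1 c2 c3 r12 r13 r21 r23 r31 r32 : nat} :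
  (0 < n1)%N -> (0 < n2)%N -> (0 < n3)%N ->
  least_mul_in n1 n2 n3 c1 -> least_mul_in n2 n1 n3 c2 -> least_mul_in n3 n1 n2 c3 ->
  c1%:Z * n1%:Z = r12%:Z * n2%:Z + r13%:Z * n3%:Z ->
  c2%:Z * n2%:Z = r21%:Z * n1%:Z + r23%:Z * n3%:Z ->
  c3%:Z * n3%:Z = r31%:Z * n1%:Z + r32%:Z * n2%:Z ->
  (0 < r12)%N -> (0 < r13)%N -> (0 < r21)%N -> (0 < r23)%N -> (0 < r31)%N -> (0 < r32)%N ->
  [/\ c1 = (r21 + r31)%N, c2 = (r12 + r32)%N & c3 = (r13 + r23)%N].
Proof.
move=> n1_gt0 n2_gt0 n3_gt0 M1 M2 M3 E1 E2 E3 p12 p13 p21 p23 p31 p32.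
have E1' : c1%:Z * n1%:Z = r13%:Z * n3%:Z + r12%:Z * n2%:Z by lia.
have E2' : c2%:Z * n2%:Z = r23%:Z * n3%:Z + r21%:Z * n1%:Z by lia.
have E3' : c3%:Z * n3%:Z = r32%:Z * n2%:Z + r31%:Z * n1%:Z by lia.
have l12 := rel_lt_least_mul M1 E1 E2 p21 p13 n3_gt0.
have l13 := rel_lt_least_mul (least_mul_inC M1) E1' E3 p31 p12 n2_gt0.
have l21 := rel_lt_least_mul M2 E2 E1 p12 p23 n3_gt0.
have l23 := rel_lt_least_mul (least_mul_inC M2) E2' E3' p32 p21 n1_gt0.
have l31 := rel_lt_least_mul M3 E3 E1' p13 p32 n2_gt0.
have l32 := rel_lt_least_mul (least_mul_inC M3) E3' E2' p23 p31 n1_gt0.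
have s1 := least_mul_le_rel_sum M1 E2 E3' l32 l23 n2_gt0.
have s2 := least_mul_le_rel_sum M2 E1 E3 l31 l13 n1_gt0.
have s3 := least_mul_le_rel_sum M3 E1' E2 l21 l12 n1_gt0.
split; nia.
Qed.

(* With [A = a + 1], [X = cp - 1 - b], [Y = rq - 1 - d] we get [A n1 = X p + Y q];
   each sign pattern of [X] and [Y] contradicts the minimality of [c1], [cp] or [cq]. *)
Lemma corner_notin_S {n1 p q c1 cp cq rp rq : nat} :
  least_mul_in n1 p q c1 -> least_mul_in p n1 q cp -> least_mul_in q n1 p cq ->
  c1%:Z * n1%:Z = rp%:Z * p%:Z + rq%:Z * q%:Z -> (rq < cq)%N ->
  (0 < n1)%N -> (0 < p)%N -> (0 < q)%N -> forall a b d : nat,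
  (cp%:Z - 1) * p%:Z + (rq%:Z - 1) * q%:Z - n1%:Z <> a%:Z * n1%:Z + b%:Z * p%:Z + d%:Z * q%:Z.
Proof.
move=> M1 Mp Mq E1 rq_lt n1_gt0 p_gt0 q_gt0 a b d E.
set A : int := a%:Z + 1; set X : int := cp%:Z - 1 - b%:Z; set Y : int := rq%:Z - 1 - d%:Z.
have EA : A * n1%:Z = X * p%:Z + Y * q%:Z by rewrite /A /X /Y; lia.
have A_gt0 : 0 < A by rewrite /A; lia.
have X_lt : X < cp%:Z by rewrite /X; lia.
have Y_lt : Y < rq%:Z by rewrite /Y; lia.
clearbody A X Y.
have An1_gt0 : 0 < A * n1%:Z by rewrite mulr_gt0 //; lia.
case: (lerP 0 X) => [X_ge0|X_lt0]; case: (lerP 0 Y) => [Y_ge0|Y_lt0].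
- have c1_le := least_mul_in_le M1 EA A_gt0 X_ge0 Y_ge0.
  have Ep : (X - rp%:Z) * p%:Z = (A - c1%:Z) * n1%:Z + (rq%:Z - Y) * q%:Z by lia.
  have pos : 0 < X - rp%:Z.
    apply: (@gt0_of_mulr_gt0 _ p%:Z) => //; rewrite Ep; nia.
  have := least_mul_in_le Mp Ep pos; lia.
- have Ep : X * p%:Z = A * n1%:Z + (- Y) * q%:Z by lia.
  have pos : 0 < X.
    apply: (@gt0_of_mulr_gt0 _ p%:Z) => //; rewrite Ep; nia.
  have := least_mul_in_le Mp Ep pos; lia.
- have Eq : Y * q%:Z = A * n1%:Z + (- X) * p%:Z by lia.
  have pos : 0 < Y.
    apply: (@gt0_of_mulr_gt0 _ q%:Z) => //; rewrite Eq; nia.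
  have := least_mul_in_le Mq Eq pos; lia.
- nia.
Qed.

Section LShapedRepresentation.

Context {n1 n2 n3 c1 c2 c3 r12 r13 r21 r23 r31 r32 : nat}.
Hypotheses (n1_gt0 : (0 < n1)%N) (c1_gt0 : (0 < c1)%N).
Hypotheses (r21_gt0 : (0 < r21)%N) (r31_gt0 : (0 < r31)%N).
Hypothesis E1 : c1%:Z * n1%:Z = r12%:Z * n2%:Z + r13%:Z * n3%:Z.
Hypothesis E2 : c2%:Z * n2%:Z = r21%:Z * n1%:Z + r23%:Z * n3%:Z.
Hypothesis E3 : c3%:Z * n3%:Z = r31%:Z * n1%:Z + r32%:Z * n2%:Z.

Definition in_L (x y : nat) : Prop := [/\ (x < c2)%N, (y < c3)%N & (x < r12 \/ y < r13)%N].

(* Each relation trades part of [x n2 + y n3] for a positive multiple of [n1],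
   so the reduction terminates. *)
Lemma L_representation (x y : nat) (t : int) :
  exists x' y' : nat, exists t' : int,
    in_L x' y' /\
    t * n1%:Z + x%:Z * n2%:Z + y%:Z * n3%:Z = t' * n1%:Z + x'%:Z * n2%:Z + y'%:Z * n3%:Z.
Proof.
move: {2}(x * n2 + y * n3)%N (erefl (x * n2 + y * n3)%N) => N.
elim/ltn_ind: N x y t => N IH x y t HN.
case: (leqP c2 x) => [c2_le|x_lt].
  have [x' Ex] : exists x', x = (c2 + x')%N by exists (x - c2)%N; lia.
  subst x.
  have [x'' [y'' [t'' [L E]]]] :=
    IH (x' * n2 + (y + r23) * n3)%N ltac:(nia) x' (y + r23)%N (t + r21%:Z) erefl.
  by exists x'', y'', t''; split=> //; rewrite -E; lia.
case: (leqP c3 y) => [c3_le|y_lt].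
  have [y' Ey] : exists y', y = (c3 + y')%N by exists (y - c3)%N; lia.
  subst y.
  have [x'' [y'' [t'' [L E]]]] :=
    IH ((x + r32) * n2 + y' * n3)%N ltac:(nia) (x + r32)%N y' (t + r31%:Z) erefl.
  by exists x'', y'', t''; split=> //; rewrite -E; lia.
case: (leqP r12 x) => [r12_le|x_lt']; last first.
  by exists x, y, t; split=> //; split=> //; left.
case: (leqP r13 y) => [r13_le|y_lt']; last first.
  by exists x, y, t; split=> //; split=> //; right.
have [x' Ex] : exists x', x = (r12 + x')%N by exists (x - r12)%N; lia.
subst x.
have [y' Ey] : exists y', y = (r13 + y')%N by exists (y - r13)%N; lia.
subst y.
have [x'' [y'' [t'' [L E]]]] := IH (x' * n2 + y' * n3)%N ltac:(nia) x' y' (t + c1%:Z) erefl.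
by exists x'', y'', t''; split=> //; rewrite -E; lia.
Qed.

Lemma inS3_above_corners (m : int) : coprime n2 n1 ->
  (c2%:Z - 1) * n2%:Z + (r13%:Z - 1) * n3%:Z - n1%:Z < m ->
  (r12%:Z - 1) * n2%:Z + (c3%:Z - 1) * n3%:Z - n1%:Z < m -> inS3 n1 n2 n3 m.
Proof.
move=> co corner1_lt corner2_lt.
have [/andP [x_ge0 _] [q Hq]] := @resinv_spec m n2%:Z n1%:Z ltac:(lia) (coprimez_nat co).
have [x' [y' [t [[x'_lt y'_lt L] Em]]]] :=
  L_representation `|resinv m n2%:Z n1%:Z|%N 0 (- q).
have -> : m = t * n1%:Z + x'%:Z * n2%:Z + y'%:Z * n3%:Z by rewrite -Em; lia.
have t_ge0 : 0 <= t.
  rewrite leNgt; apply/negP => t_lt0.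
  have tn1_le : t * n1%:Z <= - n1%:Z by nia.
  case: L => [x'_lt' | y'_lt'].
  - have : x'%:Z * n2%:Z <= (r12%:Z - 1) * n2%:Z by apply: ler_wpM2r; lia.
    have : y'%:Z * n3%:Z <= (c3%:Z - 1) * n3%:Z by apply: ler_wpM2r; lia.
    lia.
  - have : x'%:Z * n2%:Z <= (c2%:Z - 1) * n2%:Z by apply: ler_wpM2r; lia.
    have : y'%:Z * n3%:Z <= (r13%:Z - 1) * n3%:Z by apply: ler_wpM2r; lia.
    lia.
by exists `|t|%N, x', y'; lia.
Qed.

End LShapedRepresentation.

Lemma frobenius_of_relations {n1 n2 n3 c1 c2 c3 r12 r13 r21 r23 r31 r32 : nat} :
  (0 < n1)%N -> (0 < n2)%N -> (0 < n3)%N -> coprime n2 n1 ->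
  least_mul_in n1 n2 n3 c1 -> least_mul_in n2 n1 n3 c2 -> least_mul_in n3 n1 n2 c3 ->
  c1%:Z * n1%:Z = r12%:Z * n2%:Z + r13%:Z * n3%:Z ->
  c2%:Z * n2%:Z = r21%:Z * n1%:Z + r23%:Z * n3%:Z ->
  c3%:Z * n3%:Z = r31%:Z * n1%:Z + r32%:Z * n2%:Z ->
  (0 < r21)%N -> (0 < r23)%N -> (0 < r31)%N -> (0 < r32)%N ->
  c2 = (r12 + r32)%N -> c3 = (r13 + r23)%N ->
  is_frobenius n1 n2 n3
    (c1%:Z * n1%:Z + Num.max (r23%:Z * n3%:Z) (r32%:Z * n2%:Z) - n1%:Z - n2%:Z - n3%:Z).
Proof.
move=> n1_gt0 n2_gt0 n3_gt0 co M1 M2 M3 E1 E2 E3 p21 p23 p31 p32 e2 e3.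
have corner1 : (c2%:Z - 1) * n2%:Z + (r13%:Z - 1) * n3%:Z - n1%:Z =
    c1%:Z * n1%:Z + r32%:Z * n2%:Z - n1%:Z - n2%:Z - n3%:Z by rewrite e2; lia.
have corner2 : (r12%:Z - 1) * n2%:Z + (c3%:Z - 1) * n3%:Z - n1%:Z =
    c1%:Z * n1%:Z + r23%:Z * n3%:Z - n1%:Z - n2%:Z - n3%:Z by rewrite e3; lia.
split.
  case=> a [b [d]]; case: (leP (r23%:Z * n3%:Z) (r32%:Z * n2%:Z)) => _ Eabd.
  - apply: (corner_notin_S M1 M2 M3 E1 _ n1_gt0 n2_gt0 n3_gt0 a b d); lia.
  - have E1' : c1%:Z * n1%:Z = r13%:Z * n3%:Z + r12%:Z * n2%:Z by lia.
    apply: (corner_notin_S (least_mul_inC M1) M3 M2 E1' _ n1_gt0 n3_gt0 n2_gt0 a d b); lia.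
have [c1_gt0 _ _] := M1.
move=> m; have := inS3_above_corners n1_gt0 c1_gt0 p21 p31 E1 E2 E3 m co.
by case: (leP (r23%:Z * n3%:Z) (r32%:Z * n2%:Z)) => cmp above m_gt; apply: above; lia.
Qed.

Lemma least_mul_relations {n1 n2 n3 c1 c2 c3 : nat} :
  (0 < n1)%N -> (0 < n2)%N -> (0 < n3)%N ->
  coprime n1 n2 -> coprime n1 n3 -> coprime n2 n3 ->
  ~ inS2 n2 n3 n1%:Z -> ~ inS2 n1 n3 n2%:Z -> ~ inS2 n1 n2 n3%:Z ->
  least_mul_in n1 n2 n3 c1 -> least_mul_in n2 n1 n3 c2 -> least_mul_in n3 n1 n2 c3 ->
  exists r12 r13 r21 r23 r31 r32 : nat,
  [/\ [/\ c1%:Z * n1%:Z = r12%:Z * n2%:Z + r13%:Z * n3%:Z,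
          c2%:Z * n2%:Z = r21%:Z * n1%:Z + r23%:Z * n3%:Z &
          c3%:Z * n3%:Z = r31%:Z * n1%:Z + r32%:Z * n2%:Z],
      [/\ (0 < r12)%N, (0 < r13)%N & (0 < r21)%N],
      [/\ (0 < r23)%N, (0 < r31)%N & (0 < r32)%N],
      c2 = (r12 + r32)%N & c3 = (r13 + r23)%N].
Proof.
move=> n1_gt0 n2_gt0 n3_gt0 co12 co13 co23 n1_notin n2_notin n3_notin M1 M2 M3.
have co21 : coprime n2 n1 by rewrite coprime_sym.
have co31 : coprime n3 n1 by rewrite coprime_sym.
have co32 : coprime n3 n2 by rewrite coprime_sym.
have inS2C p q k : ~ inS2 p q k -> ~ inS2 q p k.
  by move=> notin [x [y E]]; apply: notin; exists y, x; lia.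
have [r12 [r13 E1]] := least_mul_in_rel M1.
have [r21 [r23 E2]] := least_mul_in_rel M2.
have [r31 [r32 E3]] := least_mul_in_rel M3.
have E1' : c1%:Z * n1%:Z = r13%:Z * n3%:Z + r12%:Z * n2%:Z by lia.
have E2' : c2%:Z * n2%:Z = r23%:Z * n3%:Z + r21%:Z * n1%:Z by lia.
have E3' : c3%:Z * n3%:Z = r32%:Z * n2%:Z + r31%:Z * n1%:Z by lia.
have p12 := least_mul_rel_gt0 n3_gt0 co13 n2_notin M1 E1.
have p13 := least_mul_rel_gt0 n2_gt0 co12 n3_notin (least_mul_inC M1) E1'.
have p21 := least_mul_rel_gt0 n3_gt0 co23 n1_notin M2 E2.
have p23 := least_mul_rel_gt0 n1_gt0 co21 (inS2C _ _ _ n3_notin) (least_mul_inC M2) E2'.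
have p31 := least_mul_rel_gt0 n2_gt0 co32 (inS2C _ _ _ n1_notin) M3 E3.
have p32 := least_mul_rel_gt0 n1_gt0 co31 (inS2C _ _ _ n2_notin) (least_mul_inC M3) E3'.
have [_ e2 e3] := least_mul_eq_rel_sum n1_gt0 n2_gt0 n3_gt0 M1 M2 M3 E1 E2 E3
  p12 p13 p21 p23 p31 p32.
by exists r12, r13, r21, r23, r31, r32.
Qed.

Lemma frobenius_of_least_mul (n1 n2 n3 c1 c2 c3 : nat) :
  (0 < n1)%N -> (0 < n2)%N -> (0 < n3)%N ->
  coprime n1 n2 -> coprime n1 n3 -> coprime n2 n3 ->
  ~ inS2 n2 n3 n1%:Z -> ~ inS2 n1 n3 n2%:Z -> ~ inS2 n1 n2 n3%:Z ->
  least_mul_in n1 n2 n3 c1 -> least_mul_in n2 n1 n3 c2 -> least_mul_in n3 n1 n2 c3 ->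
  is_frobenius n1 n2 n3
    (c1%:Z * n1%:Z + Num.max (resinv (c2%:Z * n2%:Z) n3%:Z n1%:Z * n3%:Z)
                             (resinv (c3%:Z * n3%:Z) n2%:Z n1%:Z * n2%:Z)
     - n1%:Z - n2%:Z - n3%:Z).
Proof.
move=> n1_gt0 n2_gt0 n3_gt0 co12 co13 co23 n1_notin n2_notin n3_notin M1 M2 M3.
have [r12 [r13 [r21 [r23 [r31 [r32 [[E1 E2 E3] [p12 p13 p21] [p23 p31 p32] e2 e3]]]]]]] :=
  least_mul_relations n1_gt0 n2_gt0 n3_gt0 co12 co13 co23 n1_notin n2_notin n3_notin M1 M2 M3.
have c2_le : c2%:Z <= n1%:Z by apply: (@least_mul_in_le _ _ _ _ _ n2%:Z 0 M2); lia.
have c3_le : c3%:Z <= n1%:Z by apply: (@least_mul_in_le _ _ _ _ _ n3%:Z 0 M3); lia.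
have -> : resinv (c2%:Z * n2%:Z) n3%:Z n1%:Z = r23%:Z.
  apply: resinv_unique; [lia | by rewrite coprimez_nat // coprime_sym | lia |].
  by exists (- r21%:Z); lia.
have -> : resinv (c3%:Z * n3%:Z) n2%:Z n1%:Z = r32%:Z.
  apply: resinv_unique; [lia | by rewrite coprimez_nat // coprime_sym | lia |].
  by exists (- r31%:Z); lia.
by apply: frobenius_of_relations E1 E2 E3 p21 p23 p31 p32 e2 e3; rewrite // coprime_sym.
Qed.

Theorem mainTheorem5 (n1 n2 n3 : nat) :
  (0 < n3)%N -> (n3 < n2)%N -> (n2 < n1)%N ->
  coprime n1 n2 -> coprime n1 n3 -> coprime n2 n3 ->
  ~ inS2 n2 n3 n1%:Z -> ~ inS2 n1 n3 n2%:Z -> ~ inS2 n1 n2 n3%:Z ->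
  let z1 := n1%:Z in let z2 := n2%:Z in let z3 := n3%:Z in
  let I1 := `|ceilz (resinv (- z3) z1 z2 * resinv z3 z2 z1) z3|%N in
  let I2 := `|ceilz (resinv (- z3) z2 z1 * resinv z3 z1 z2) z3|%N in
  let I3 := `|ceilz (resinv (- z2) z3 z1 * resinv z2 z1 z3) z2|%N in
  let C1 := minOver I1 (fun a => a%:Z * z2
              - resinv (- z3) z1 z2 * ((a%:Z * z1) %/ resinv z3 z2 z1)%Z) in
  let C2 := minOver I2 (fun b => b%:Z * z1
              - resinv (- z3) z2 z1 * ((b%:Z * z2) %/ resinv z3 z1 z2)%Z) in
  let C3 := minOver I3 (fun g => g%:Z * z1
              - resinv (- z2) z3 z1 * ((g%:Z * z3) %/ resinv z2 z1 z3)%Z) in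
  is_frobenius n1 n2 n3
    (C1 * z1 + Num.max (resinv (C2 * z2) z3 z1 * z3) (resinv (C3 * z3) z2 z1 * z2)
     - z1 - z2 - z3).
Proof.
move=> n3_gt0 n3_lt n2_lt co12 co13 co23 n1_notin n2_notin n3_notin.
move=> z1 z2 z3 I1 I2 I3 C1 C2 C3.
have co21 : coprime n2 n1 by rewrite coprime_sym.
have co31 : coprime n3 n1 by rewrite coprime_sym.
have co32 : coprime n3 n2 by rewrite coprime_sym.
have n3_gt1 : (1 < n3)%N.
  rewrite ltn_neqAle n3_gt0 andbT; apply: contra_notN n2_notin => /eqP n3_1.
  by exists 0%N, n2; rewrite -n3_1 muln1.
have [c1 [EC1 M1]] := @least_mul_in_minOver n1 n2 n3
  (ltn_trans n3_gt1 (ltn_trans n3_lt n2_lt)) n3_gt0 n3_lt co12 co13.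
have [c2 [EC2 M2]] := @least_mul_in_minOver n2 n1 n3
  (ltn_trans n3_gt1 n3_lt) n3_gt0 (ltn_trans n3_lt n2_lt) co21 co23.
have [c3 [EC3 M3]] := @least_mul_in_minOver n3 n1 n2
  n3_gt1 (ltn_trans n3_gt0 n3_lt) n2_lt co31 co32.
have -> : C1 = c1%:Z by exact: EC1.
have -> : C2 = c2%:Z by exact: EC2.
have -> : C3 = c3%:Z by exact: EC3.
by apply: frobenius_of_least_mul => //; lia.
Qed.
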